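(* Let $w$ and $w'$ be binary words. If $G(w)$ is not an identity permutation, then $G(w')$ contains $G(w)$ as a pattern if and only if $w'$ contains $w$ as a (not necessarily contiguous) subsequence. If $G(w)$ is the identity permutation $\operatorname{id}_k = 12\cdots k$ of size $k$, then $G(w')$ contains $\operatorname{id}_k$ if and only if $w'$ contains $0^j1^{k-j}$ as a subsequence for some $j \in \{0,1,\dots,k\}$.
   Context: For a binary word $w = w_1\cdots w_n$, let $A = \{i \in [n] : w_i = 0\}$ with $|A| = a$. The permutation $G(w)$ of $[n]$ (one-line notation) has as its first $a$ entries the elements of $A$ in increasing order, followed by the elements of $[n]\setminus A$ in increasing order. Every Grassmannian permutation (at most one descent) arises this way. A permutation $\sigma$ of $[n]$ contains a permutation $\pi$ of $[m]$ if there are indices $h(1)<\dots<h(m)$ with $\sigma_{h(i)}<\sigma_{h(j)}$ iff $\pi_i<\pi_j$; otherwise $\sigma$ avoids $\pi$. $0^j$ denotes $j$ consecutive zeros, and similarly $1^j$. *)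

From mathcomp Require Import all_boot.
Set Implicit Arguments. Unset Strict Implicit. Unset Printing Implicit Defensive.

(* Binary words are [seq bool], with letter 0 encoded as [false] and
   letter 1 as [true].  Positions of a word w are 1..size w.
   Permutations of [n] are given in one-line notation as [seq nat]
   (values in 1..n). *)

Definition G (w : seq bool) : seq nat :=
  [seq i.+1 | i <- iota 0 (size w) & ~~ nth false w i] ++
  [seq i.+1 | i <- iota 0 (size w) & nth false w i].

Definition idperm (k : nat) : seq nat := iota 1 k.

Definition contains_pattern (sigma pi : seq nat) : Prop :=
  exists h : seq nat,
    [/\ size h = size pi, sorted ltn h, all (fun x => x < size sigma) h &
      forall i j, i < size pi -> j < size pi ->
        (nth 0 sigma (nth 0 h i) < nth 0 sigma (nth 0 h j)) = (nth 0 pi i < nth 0 pi j)].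

From mathcomp Require Import all_boot zify.
Set Implicit Arguments. Unset Strict Implicit. Unset Printing Implicit Defensive.

(* G u lists the positions of u ordered lexicographically by (letter, position).
   A subsequence embedding of u into w' preserves letters and the order of
   positions, hence carries G u onto an occurrence of the same pattern in G w'.
   Conversely an occurrence of G u in G w' yields such an embedding as soon as
   it maps the zero block of G u into the zero block of G w'.  If u contains the
   subsequence 10, the last zero of u lies after its first one, so G u has a
   descent across its two blocks; descents of the Grassmannian permutation G w'
   only occur across its own block boundary, which forces every occurrence to
   respect blocks.  Otherwise u = 0^j 1^(k-j) and G u is the identity; an
   occurrence of id_k in G w' splits at some j into a part in the zero block and
   a part in the one block, i.e. it respects the blocks of 0^j 1^(k-j). *)

Lemma ltn_nth_sorted (s : seq nat) i j : sorted ltn s -> i < size s -> j < size s ->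
  (nth 0 s i < nth 0 s j) = (i < j).
Proof.
by move=> /(sorted_ltn_nth ltn_trans 0) /leq_mono_in /leqW_mono_in; apply.
Qed.

Lemma leq_nth_sorted (s : seq nat) i j : sorted ltn s -> i < size s -> j < size s ->
  (nth 0 s i <= nth 0 s j) = (i <= j).
Proof. by move=> /(sorted_ltn_nth ltn_trans 0) /leq_mono_in; apply. Qed.

Lemma leq_nth_find_sorted (s : seq nat) c i : sorted ltn s -> i < size s ->
  (c <= nth 0 s i) = (find (leq c) s <= i).
Proof.
move=> s_sorted i_lt; case: (leqP (find (leq c) s) i) => [find_le | lt_find].
  have find_lt : find (leq c) s < size s by exact: leq_ltn_trans find_le i_lt.
  have /= c_le := nth_find 0 (etrans (has_find _ _) find_lt).
  by apply: leq_trans c_le _; rewrite leq_nth_sorted.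
exact: before_find.
Qed.

Section SubseqEmbedding.

Variables (T : eqType) (x0 : T).

Definition embedding (s t : seq T) (q : nat -> nat) : Prop :=
  {in [pred i | i < size s] &, {homo q : i j / i < j}} /\
  (forall i, i < size s -> q i < size t /\ nth x0 t (q i) = nth x0 s i).

Lemma embedding_subseq s t : subseq s t -> exists q, embedding s t q.
Proof.
elim: t s => [|y t IHt] [|x s] //=; try by exists id.
case: eqP => [-> | _] /IHt [q [q_mono q_nth]].
  exists (fun i => if i is i'.+1 then (q i').+1 else 0); split.
    by case=> [|i] [|j] //; rewrite !inE !ltnS; apply: q_mono.
  by case=> [|i] //= /q_nth.
exists (fun i => (q i).+1); split=> [i j i_lt j_lt|i /q_nth] /=.
  by rewrite ltnS; apply: q_mono.
by [].
Qed.

Lemma subseq_embedding s t q : embedding s t q -> subseq s t.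
Proof.
elim: s t q => [|x s IHs] t q [q_mono q_nth]; first exact: sub0seq.
have [q0_lt q0_nth] := q_nth 0 isT.
have q0_ltn i : i < size s -> q 0 < q i.+1 by move=> i_lt; apply: q_mono.
rewrite -(cat_take_drop (q 0) t) (drop_nth x0 q0_lt) q0_nth.
apply: (cat_subseq (sub0seq _)); rewrite /= eqxx.
apply: (IHs _ (fun i => q i.+1 - (q 0).+1)); split=> [i j i_lt j_lt i_lt_j | i i_lt].
  have := q_mono i.+1 j.+1 i_lt j_lt i_lt_j; have := q0_ltn i i_lt; lia.
have [qi_lt qi_nth] := q_nth i.+1 i_lt; have := q0_ltn i i_lt => q0_qi.
by rewrite size_drop nth_drop subnKC // qi_nth; split=> //; lia.
Qed.

Lemma subseq_embeddingP s t : subseq s t <-> exists q, embedding s t q.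
Proof. by split=> [/embedding_subseq | [q /subseq_embedding]]. Qed.

End SubseqEmbedding.

Definition zero_pos (u : seq bool) : seq nat :=
  [seq i.+1 | i <- iota 0 (size u) & ~~ nth false u i].

Definition one_pos (u : seq bool) : seq nat :=
  [seq i.+1 | i <- iota 0 (size u) & nth false u i].

Lemma mem_succ_filter_iota (p : pred nat) m x :
  (x \in [seq i.+1 | i <- iota 0 m & p i]) = (0 < x <= m) && p x.-1.
Proof.
apply/mapP/idP => [[i] | /andP[x_range px]].
  by rewrite mem_filter mem_iota => /andP[pi i_lt] ->; rewrite /= pi andbT; lia.
by exists x.-1; rewrite ?mem_filter ?mem_iota ?px /=; lia.
Qed.

Lemma sorted_succ_filter_iota (p : pred nat) m :
  sorted ltn [seq i.+1 | i <- iota 0 m & p i].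
Proof. by rewrite sorted_map; apply/sorted_filter/iota_ltn_sorted/ltn_trans. Qed.

Definition lex_ltn (b1 : bool) (v1 : nat) (b2 : bool) (v2 : nat) : bool :=
  (b1 < b2) || (b1 == b2) && (v1 < v2).

Section Grassmannian.

Variable u : seq bool.
Local Notation n := (size u).
Local Notation a := (size (zero_pos u)).

Lemma G_split : G u = zero_pos u ++ one_pos u.
Proof. by []. Qed.

Lemma mem_zero_pos x : (x \in zero_pos u) = (0 < x <= n) && ~~ nth false u x.-1.
Proof. exact: mem_succ_filter_iota. Qed.

Lemma mem_one_pos x : (x \in one_pos u) = (0 < x <= n) && nth false u x.-1.
Proof. exact: mem_succ_filter_iota. Qed.

Lemma size_zero_pos_one_pos : a + size (one_pos u) = n.
Proof.
rewrite !size_map !size_filter addnC.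
by rewrite (count_predC (fun i => nth false u i)) size_iota.
Qed.

Lemma size_G : size (G u) = n.
Proof. by rewrite G_split size_cat size_zero_pos_one_pos. Qed.

Lemma mem_G x : (x \in G u) = (0 < x <= n).
Proof. by rewrite G_split mem_cat mem_zero_pos mem_one_pos -andb_orr orNb andbT. Qed.

Lemma nth_G_bounds i : i < n -> 0 < nth 0 (G u) i <= n.
Proof. by move=> i_lt; rewrite -mem_G mem_nth ?size_G. Qed.

Lemma index_G k : k < n -> index k.+1 (G u) < n /\ nth 0 (G u) (index k.+1 (G u)) = k.+1.
Proof.
move=> k_lt; have k_in : k.+1 \in G u by rewrite mem_G.
by rewrite -[n in _ < n]size_G index_mem nth_index.
Qed.

Lemma nth_G_letter i : i < n -> nth false u (nth 0 (G u) i).-1 = (a <= i).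
Proof.
move=> i_lt; rewrite G_split nth_cat; case: ltnP => [i_lt_a | a_le_i].
  by have := mem_nth 0 i_lt_a; rewrite mem_zero_pos => /andP[_ /negbTE].
have i_lt' : i - a < size (one_pos u) by have := size_zero_pos_one_pos; lia.
by have := mem_nth 0 i_lt'; rewrite mem_one_pos => /andP[_].
Qed.

Lemma ltn_nth_G_block i j : i < n -> j < n -> (a <= i) = (a <= j) ->
  (nth 0 (G u) i < nth 0 (G u) j) = (i < j).
Proof.
move=> i_lt j_lt same_block; rewrite G_split !nth_cat.
have one_size := size_zero_pos_one_pos.
case: (ltnP i a) same_block => a_i; case: (ltnP j a) => a_j //= _;
  by rewrite ltn_nth_sorted ?sorted_succ_filter_iota //; lia.
Qed.

Lemma leq_nth_G_block i j : i < n -> j < n -> (a <= i) = (a <= j) ->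
  (nth 0 (G u) i <= nth 0 (G u) j) = (i <= j).
Proof.
by move=> i_lt j_lt same; rewrite leqNgt (ltn_nth_G_block j_lt i_lt (esym same)) -leqNgt.
Qed.

Lemma ltn_index_G i j : i < n -> j < n ->
  (i < j) = lex_ltn (nth false u (nth 0 (G u) i).-1) (nth 0 (G u) i)
                    (nth false u (nth 0 (G u) j).-1) (nth 0 (G u) j).
Proof.
move=> i_lt j_lt; rewrite /lex_ltn !nth_G_letter //.
have [same | diff] := eqVneq (a <= i) (a <= j).
  by rewrite same ltnn ltn_nth_G_block.
by rewrite andFb orbF; move: diff; case: (leqP a i); case: (leqP a j); lia.
Qed.

Lemma G_descent_crosses_boundary i j : i < j -> j < n ->
  nth 0 (G u) j < nth 0 (G u) i -> i < a <= j.
Proof.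
move=> i_lt_j j_lt descent.
have [same | diff] := eqVneq (a <= i) (a <= j).
  by move: descent; rewrite (ltn_nth_G_block j_lt _ (esym same)); lia.
by move: diff; case: (leqP a i); case: (leqP a j); lia.
Qed.

End Grassmannian.

Definition step_word (j k : nat) : seq bool := nseq j false ++ nseq (k - j) true.

Lemma size_step_word j k : j <= k -> size (step_word j k) = k.
Proof. by rewrite size_cat !size_nseq; lia. Qed.

Lemma nth_step_word j k i : i < k -> nth false (step_word j k) i = (j <= i).
Proof.
move=> i_lt; rewrite nth_cat size_nseq !nth_nseq.
by case: ltnP => [i_lt_j | j_le_i]; try case: ifP; lia.
Qed.

Lemma zero_pos_step_word j k : j <= k -> zero_pos (step_word j k) = iota 1 j.
Proof.
move=> j_le_k.
apply: (irr_sorted_eq ltn_trans ltnn (sorted_succ_filter_iota _ _) (iota_ltn_sorted _ _)).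
move=> x; rewrite mem_zero_pos mem_iota size_step_word //.
by case/boolP: (0 < x <= k) => /= x_range; rewrite ?nth_step_word; lia.
Qed.

Lemma one_pos_step_word j k : j <= k -> one_pos (step_word j k) = iota j.+1 (k - j).
Proof.
move=> j_le_k.
apply: (irr_sorted_eq ltn_trans ltnn (sorted_succ_filter_iota _ _) (iota_ltn_sorted _ _)).
move=> x; rewrite mem_one_pos mem_iota size_step_word //.
by case/boolP: (0 < x <= k) => /= x_range; rewrite ?nth_step_word; lia.
Qed.

Lemma G_step_word j k : j <= k -> G (step_word j k) = idperm k.
Proof.
by move=> j_le_k; rewrite G_split zero_pos_step_word // one_pos_step_word // -iotaD subnKC.
Qed.

Lemma no_inversion_step_word (u : seq bool) :
  ~~ subseq [:: true; false] u -> u = step_word (count_mem false u) (size u).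
Proof.
elim: u => [|[] u IHu] //=.
  rewrite sub1seq => no_zero; rewrite (count_memPn no_zero) /step_word /= ?subn0.
  by congr (_ :: _); apply/all_pred1P/allP => -[] // zero_in; rewrite zero_in in no_zero.
by move=> /IHu {1}->; rewrite /step_word /= subSS.
Qed.

Lemma G_boundary_descent (u : seq bool) : G u <> idperm (size u) ->
  [/\ 0 < size (zero_pos u), size (zero_pos u) < size u &
      nth 0 (G u) (size (zero_pos u)) < nth 0 (G u) (size (zero_pos u)).-1].
Proof.
move=> not_id; set a := size (zero_pos u).
have /(subseq_embeddingP false)[q [q_mono q_nth]] : subseq [:: true; false] u.
  apply: contra_notT not_id => /no_inversion_step_word u_step.
  by rewrite u_step G_step_word ?size_step_word ?count_size // -u_step.
have [one_lt one_at] := q_nth 0 isT; have [zero_lt zero_at] := q_nth 1 isT.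
have one_before_zero : q 0 < q 1 by apply: q_mono.
have [r_lt r_val] := index_G one_lt; have [p_lt p_val] := index_G zero_lt.
set r := index (q 0).+1 (G u) in r_lt r_val; set p := index (q 1).+1 (G u) in p_lt p_val.
have a_le_r : a <= r by rewrite -nth_G_letter // r_val /= one_at.
have p_lt_a : p < a by rewrite ltnNge -nth_G_letter // p_val /= zero_at.
have a_lt : a < size u by exact: leq_ltn_trans a_le_r r_lt.
have G_a_le : nth 0 (G u) a <= (q 0).+1 by rewrite -r_val leq_nth_G_block // a_le_r leqnn.
have G_a1_ge : (q 1).+1 <= nth 0 (G u) a.-1 by rewrite -p_val leq_nth_G_block //; lia.
split; lia.
Qed.

(* [contains_pattern sigma pi] unfolds to [exists h, occurrence sigma pi h]. *)
Definition occurrence (sigma pi h : seq nat) : Prop :=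
  [/\ size h = size pi, sorted ltn h, all (fun x => x < size sigma) h &
      forall i j, i < size pi -> j < size pi ->
        (nth 0 sigma (nth 0 h i) < nth 0 sigma (nth 0 h j)) = (nth 0 pi i < nth 0 pi j)].

Definition preserves_blocks (w u : seq bool) (h : seq nat) : Prop :=
  forall i, i < size u ->
    (size (zero_pos w) <= nth 0 h i) = (size (zero_pos u) <= i).

Lemma nth_occurrence_lt sigma pi h i :
  occurrence sigma pi h -> i < size pi -> nth 0 h i < size sigma.
Proof. by case=> h_size _ /allP h_all _ i_lt; rewrite h_all // mem_nth ?h_size. Qed.

Lemma subseq_of_occurrence (u w : seq bool) (h : seq nat) :
  occurrence (G w) (G u) h -> preserves_blocks w u h -> subseq u w.
Proof.
move=> occ blocks; have h_lt i : i < size u -> nth 0 h i < size w.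
  by rewrite -(size_G u) -(size_G w); apply: nth_occurrence_lt.
case: occ; rewrite !size_G => h_size _ _ h_ord.
apply/(subseq_embeddingP false).
exists (fun k => (nth 0 (G w) (nth 0 h (index k.+1 (G u)))).-1); split.
  move=> k l; rewrite !inE => k_lt l_lt k_l.
  have [ik_lt ik_val] := index_G k_lt; have [il_lt il_val] := index_G l_lt.
  have := h_ord _ _ ik_lt il_lt; rewrite ik_val il_val ltnS k_l.
  by have := nth_G_bounds (h_lt _ ik_lt); lia.
move=> k k_lt; have [ik_lt ik_val] := index_G k_lt.
have /andP[pos le] := nth_G_bounds (h_lt _ ik_lt); split; first by rewrite prednK.
by rewrite nth_G_letter ?h_lt // blocks // -nth_G_letter // ik_val.
Qed.

Lemma contains_pattern_G_subseq (u w : seq bool) : subseq u w -> contains_pattern (G w) (G u).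
Proof.
case/(subseq_embeddingP false) => q [q_homo q_nth].
have q_mono := leqW_mono_in (leq_mono_in q_homo).
pose V v := (q v.-1).+1.
pose h := [seq index (V v) (G w) | v <- G u].
have pos_lt i : i < size u -> (nth 0 (G u) i).-1 < size u.
  by move=> i_lt; have := nth_G_bounds i_lt; lia.
have V_in i : i < size u -> V (nth 0 (G u) i) \in G w.
  by move=> i_lt; rewrite mem_G; have [] := q_nth _ (pos_lt _ i_lt).
have nth_h i : i < size u -> nth 0 (G w) (nth 0 h i) = V (nth 0 (G u) i).
  by move=> i_lt; rewrite (nth_map 0) ?size_G // nth_index ?V_in.
have h_lt i : i < size u -> nth 0 h i < size w.
  by move=> i_lt; rewrite (nth_map 0) ?size_G // -(size_G w) index_mem V_in.
have letter_V i : i < size u ->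
    nth false w (V (nth 0 (G u) i)).-1 = nth false u (nth 0 (G u) i).-1.
  by move=> i_lt; have [] := q_nth _ (pos_lt _ i_lt).
have ltn_V i j : i < size u -> j < size u ->
    (V (nth 0 (G u) i) < V (nth 0 (G u) j)) = (nth 0 (G u) i < nth 0 (G u) j).
  move=> i_lt j_lt; rewrite ltnS q_mono ?inE ?pos_lt //.
  by have := nth_G_bounds i_lt; have := nth_G_bounds j_lt; lia.
have ltn_h i j : i < size u -> j < size u -> (nth 0 h i < nth 0 h j) = (i < j).
  move=> i_lt j_lt; rewrite (ltn_index_G (h_lt _ i_lt) (h_lt _ j_lt)) (ltn_index_G i_lt j_lt).
  by rewrite !nth_h // !letter_V // /lex_ltn ltn_V.
have size_h : size h = size u by rewrite size_map size_G.
exists h; split; rewrite ?size_G //.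
- by apply/(sortedP 0) => i; rewrite size_h => i_lt; rewrite /= ltn_h; lia.
- by apply/(all_nthP 0) => i; rewrite size_h => /h_lt.
- by move=> i j i_lt j_lt; rewrite !nth_h // ltn_V.
Qed.

Lemma occurrence_preserves_blocks (u w : seq bool) (h : seq nat) :
  G u <> idperm (size u) -> occurrence (G w) (G u) h -> preserves_blocks w u h.
Proof.
move=> not_id occ; have h_lt i : i < size u -> nth 0 h i < size w.
  by rewrite -(size_G u) -(size_G w); apply: nth_occurrence_lt.
case: occ => h_size h_sorted _ h_ord; rewrite size_G in h_size h_ord.
have [a_pos a_lt descent] := G_boundary_descent not_id.
set a := size (zero_pos u) in a_pos a_lt descent *.
have a1_lt : a.-1 < size u by lia.
have /andP[h_a1_lt h_a_ge] : nth 0 h a.-1 < size (zero_pos w) <= nth 0 h a.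
  apply: G_descent_crosses_boundary; first by rewrite ltn_nth_sorted ?h_size //; lia.
    exact: h_lt.
  by rewrite h_ord.
move=> i i_lt; case: (leqP a i) => [a_le_i | i_lt_a].
  by apply: leq_trans h_a_ge _; rewrite leq_nth_sorted ?h_size.
apply/negbTE; rewrite -ltnNge; apply: leq_ltn_trans h_a1_lt.
by rewrite leq_nth_sorted ?h_size //; lia.
Qed.

Lemma contains_idperm_step_word (w : seq bool) (k : nat) :
  contains_pattern (G w) (idperm k) -> exists2 j, j <= k & subseq (step_word j k) w.
Proof.
case=> h [h_size h_sorted h_all h_ord]; rewrite size_iota in h_size h_ord.
set j := find (leq (size (zero_pos w))) h.
have j_le_k : j <= k by rewrite -h_size find_size.
exists j => //; apply: (@subseq_of_occurrence _ _ h).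
  by rewrite G_step_word //; split; rewrite ?size_iota.
move=> i; rewrite size_step_word // => i_lt.
by rewrite zero_pos_step_word // size_iota leq_nth_find_sorted ?h_size.
Qed.

Theorem mainTheorem2 (w w' : seq bool) :
  (G w <> idperm (size w) ->
     (contains_pattern (G w') (G w) <-> subseq w w')) /\
  (G w = idperm (size w) ->
     (contains_pattern (G w') (idperm (size w)) <->
      exists j, j <= size w /\
        subseq (nseq j false ++ nseq (size w - j) true) w')).
Proof.
split=> [not_id | _]; split.
- move=> [h occ]; apply: (subseq_of_occurrence occ).
  exact: occurrence_preserves_blocks occ.
- exact: contains_pattern_G_subseq.
- by case/contains_idperm_step_word => j j_le sub; exists j.
- move=> [j [j_le sub]]; rewrite -(G_step_word j_le).
  exact: contains_pattern_G_subseq.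
Qed.
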